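(* Let $N\trianglelefteq G\trianglelefteq H$ be finite groups with $N\trianglelefteq H$, let $b$ be an $H$-stable block of $kG$ covering a block $c$ of $kN$, let $I_H(c)=\{h\in H\mid{}^hc=c\}$, $I_G(c)=I_H(c)\cap G$, and let $\tilde b$ be the Fong correspondent of $b$ in $I_G(c)$. Then there exist a $p$-subgroup $P$ of $I_H(c)$ and a primitive idempotent $i$ of $(kI_G(c)\tilde b)^P$ such that: $P$ is maximal among $p$-subgroups $Q$ of $H$ with $\mathrm{Br}^G_Q(b)\ne0$; $P$ is maximal among $p$-subgroups $Q$ of $I_H(c)$ with $\mathrm{Br}^{I_G(c)}_Q(\tilde b)\neq0$; $i$ is a primitive idempotent of $(kGb)^P$; and $\mathrm{Br}^G_P(i)\ne0$. Thus $i$ is a source idempotent both of the $I_H(c)$-algebra $kI_G(c)\tilde b$ and of the $H$-algebra $kGb$.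
   Context: $k$ is an algebraically closed field of characteristic $p$; blocks are primitive idempotents of $Z(kG)$; $\mathrm{Br}^G_Q:(kG)^Q\to kC_G(Q)$ sends $\sum\alpha_gg$ to $\sum_{g\in C_G(Q)}\alpha_gg$. A block $b$ of $kG$ covers a block $c$ of $kN$ ($N\trianglelefteq G$) if $bc\ne 0$. The Fong correspondent of $b$ is the unique block $\tilde b$ of $kI_G(c)$ covering $c$ with $b=\mathrm{Tr}^G_{I_G(c)}(\tilde b)=\sum_{x\in[G/I_G(c)]}{}^x\tilde b$. A source idempotent of the $H$-algebra $kGb$ is a primitive idempotent $i\in(kGb)^P$ with $\mathrm{Br}^G_P(i)\ne0$, where $P\le H$ is a $p$-subgroup maximal with $\mathrm{Br}^G_P(b)\ne0$. *)

From HB Require Import structures.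
From mathcomp Require Import all_boot all_order all_algebra all_fingroup all_solvable.
From mathcomp Require Import pgroup.
Set Implicit Arguments. Unset Strict Implicit. Unset Printing Implicit Defensive.
Import GRing.Theory.
Local Open Scope ring_scope.

(* Group algebras are modelled inside the group algebra k[gT] of the ambient
   finite group type gT: an element is a function gT -> k (its coefficients).
   kA (A a subset of gT) = elements supported in A. *)
Section GroupAlgebra.
Variables (F : fieldType) (gT : finGroupType).

Definition galg := {ffun gT -> F}.

Definition gmul (a b : galg) : galg :=
  [ffun x => \sum_(y : gT) a y * b ((y^-1 * x)%g)].

Definition gsupp (A : {set gT}) (a : galg) : Prop :=
  forall x, x \notin A -> a x = 0.

(* ^h a = h a h^-1 ; coefficient of x is a(h^-1 x h) = a (x ^ h) *)
Definition gconj (h : gT) (a : galg) : galg := [ffun x => a (x ^ h)%g].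

Definition gfixed (Q : {set gT}) (a : galg) : Prop :=
  forall q, q \in Q -> gconj q a = a.

(* Brauer morphism Br_Q : keeps the coefficients on C(Q); on (kG)^Q this is
   sum_{g in C_G(Q)} a_g g. *)
Definition gBr (Q : {set gT}) (a : galg) : galg :=
  [ffun x => if x \in ('C(Q))%g then a x else 0].

Definition gcenter (A : {set gT}) (a : galg) : Prop :=
  gsupp A a /\ forall c, gsupp A c -> gmul a c = gmul c a.

Definition prim_idem (Alg : galg -> Prop) (e : galg) : Prop :=
  [/\ Alg e, gmul e e = e, e != 0 &
      forall f, Alg f -> gmul f f = f -> gmul f e = f -> gmul e f = f ->
        f = 0 \/ f = e].

Definition gblock (A : {set gT}) (b : galg) : Prop := prim_idem (gcenter A) b.

Definition covers (b c : galg) : Prop := gmul b c != 0.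

Definition inertia (H : {set gT}) (c : galg) : {set gT} :=
  [set h in H | gconj h c == c].

Definition gTr (G K : {set gT}) (a : galg) : galg :=
  \sum_(X in lcosets K G) gconj (repr X) a.

Definition fixalg (A : {set gT}) (e : galg) (Q : {set gT}) (a : galg) : Prop :=
  [/\ gsupp A a, gmul a e = a & gfixed Q a].

Definition maxBr (p : nat) (H : {set gT}) (b : galg) (P : {group gT}) : Prop :=
  [/\ (p.-group P)%g, P \subset H, gBr P b != 0 &
      forall Q : {group gT}, (p.-group Q)%g -> Q \subset H -> gBr Q b != 0 ->
        P \subset Q -> Q :=: P].

End GroupAlgebra.

From HB Require Import structures.
From mathcomp Require Import all_boot all_order all_algebra all_fingroup all_solvable.
From mathcomp Require Import pgroup.
From Stdlib Require Import Classical.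
Set Implicit Arguments. Unset Strict Implicit. Unset Printing Implicit Defensive.
Import GRing.Theory.
Local Open Scope ring_scope.

(* For h in H \ I the block ^h c of kN differs from c, hence is orthogonal to
   it; as bt = c bt = bt c, also bt is orthogonal to ^h bt.  Expanding the
   trace, this gives b bt = bt = bt b, shows that I fixes bt, that H = G I, and
   that bt (kG) bt lies in kJ.  Now choose a p-subgroup P of I of maximal order
   with Br_P(bt) <> 0 and a primitive idempotent i of (kJ bt)^P with
   Br_P(i) <> 0.  P is maximal for (I, bt) by construction.  Since Br_P is
   multiplicative on P-fixed elements, Br_P(b) <> 0; writing b as the sum of
   the conjugates of bt over I\H and counting fixed points of a p-group modulo
   p shows that every Q with Br_Q(b) <> 0 has a conjugate inside I with
   Br(bt) <> 0, so |Q| <= |P| and P is maximal for (H, b).  Finally every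
   idempotent of (kG b)^P below i lies in i (bt kG bt) i, hence in (kJ bt)^P,
   so i stays primitive in (kG b)^P. *)

Section GroupAlgebra.
Variables (F : fieldType) (gT : finGroupType).
Local Notation galg := (galg F gT).
Implicit Types (a b e f : galg) (A : {group gT}) (g h x y : gT).

Lemma gmulE a b x : gmul a b x = \sum_(y : gT) a y * b ((y^-1 * x)%g).
Proof. by rewrite ffunE. Qed.

Lemma gmulA a b e : gmul (gmul a b) e = gmul a (gmul b e).
Proof.
apply/ffunP=> x; rewrite !gmulE.
under eq_bigr do rewrite gmulE mulr_suml.
rewrite exchange_big /=; apply: eq_bigr => y _.
rewrite gmulE mulr_sumr (reindex_inj (mulgI y)) /=.
by apply: eq_bigr => z _; rewrite mulKg invMg -!mulgA mulrA.
Qed.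

Lemma gmulDl a b e : gmul (a + b) e = gmul a e + gmul b e.
Proof.
apply/ffunP=> x; rewrite !ffunE -big_split.
by apply: eq_bigr => y _; rewrite ffunE mulrDl.
Qed.

Lemma gmulDr a b e : gmul e (a + b) = gmul e a + gmul e b.
Proof.
apply/ffunP=> x; rewrite !ffunE -big_split.
by apply: eq_bigr => y _; rewrite ffunE mulrDr.
Qed.

Lemma gmulBl a b e : gmul (a - b) e = gmul a e - gmul b e.
Proof.
apply/ffunP=> x; rewrite !ffunE -sumrB.
by apply: eq_bigr => y _; rewrite !ffunE mulrBl.
Qed.

Lemma gmulBr a b e : gmul e (a - b) = gmul e a - gmul e b.
Proof.
apply/ffunP=> x; rewrite !ffunE -sumrB.
by apply: eq_bigr => y _; rewrite !ffunE mulrBr.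
Qed.

Lemma gmul0l e : gmul 0 e = 0.
Proof. by apply/ffunP=> x; rewrite !ffunE big1 // => y _; rewrite ffunE mul0r. Qed.

Lemma gmul0r e : gmul e 0 = 0.
Proof. by apply/ffunP=> x; rewrite !ffunE big1 // => y _; rewrite ffunE mulr0. Qed.

Lemma gmul_suml (I : finType) (P : pred I) (u : I -> galg) e :
  gmul (\sum_(i | P i) u i) e = \sum_(i | P i) gmul (u i) e.
Proof.
apply: (big_ind2 (fun s t => gmul s e = t)) => //; first exact: gmul0l.
by move=> s1 t1 s2 t2 <- <-; rewrite gmulDl.
Qed.

Lemma gmul_sumr (I : finType) (P : pred I) (u : I -> galg) e :
  gmul e (\sum_(i | P i) u i) = \sum_(i | P i) gmul e (u i).
Proof.
apply: (big_ind2 (fun s t => gmul e s = t)) => //; first exact: gmul0r.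
by move=> s1 t1 s2 t2 <- <-; rewrite gmulDr.
Qed.

Lemma gconjE h a x : gconj h a x = a (x ^ h)%g.
Proof. by rewrite ffunE. Qed.

Lemma gconjM h a b : gconj h (gmul a b) = gmul (gconj h a) (gconj h b).
Proof.
apply/ffunP=> x; rewrite !ffunE (reindex_inj (@conjg_inj _ h)) /=.
by apply: eq_bigr => y _; rewrite !ffunE conjMg conjVg.
Qed.

Lemma gconjB h a b : gconj h (a - b) = gconj h a - gconj h b.
Proof. by apply/ffunP=> x; rewrite !ffunE. Qed.

Lemma gconj0 h : gconj h (0 : galg) = 0.
Proof. by apply/ffunP=> x; rewrite !ffunE. Qed.

Lemma gconj1 a : gconj 1%g a = a.
Proof. by apply/ffunP=> x; rewrite !ffunE conjg1. Qed.

Lemma gconj_mulg g h a : gconj g (gconj h a) = gconj (g * h)%g a.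
Proof. by apply/ffunP=> x; rewrite !ffunE conjgM. Qed.

Lemma gconjK h a : gconj h^-1 (gconj h a) = a.
Proof. by rewrite gconj_mulg mulVg gconj1. Qed.

Lemma gconjVK h a : gconj h (gconj h^-1 a) = a.
Proof. by rewrite gconj_mulg mulgV gconj1. Qed.

Lemma gconj_eq0 h a : (gconj h a == 0) = (a == 0).
Proof.
apply/eqP/eqP => [|->]; last exact: gconj0.
by move=> /(congr1 (gconj h^-1)); rewrite gconjK gconj0.
Qed.

Definition gdelta g : galg := [ffun x => (x == g)%:R].
Definition gscale (k : F) a : galg := [ffun x => k * a x].

Lemma sum_deltar (u : gT -> F) z : \sum_(y : gT) u y * (y == z)%:R = u z.
Proof.
rewrite (bigD1 z) //= eqxx mulr1 big1 ?addr0 // => y /negbTE ->.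
by rewrite mulr0.
Qed.

Lemma sum_deltal (u : gT -> F) z : \sum_(y : gT) (y == z)%:R * u y = u z.
Proof. by rewrite -[RHS]sum_deltar; apply: eq_bigr => y _; rewrite mulrC. Qed.

Lemma gmul_deltar e h x : gmul e (gdelta h) x = e (x * h^-1)%g.
Proof.
rewrite gmulE -[RHS](sum_deltar e); apply: eq_bigr => y _; rewrite ffunE.
rewrite (_ : (y^-1 * x == h)%g = (y == x * h^-1)%g) //.
apply/eqP/eqP => [<-|->]; first by rewrite invMg invgK mulgA mulgV mul1g.
by rewrite invMg invgK -mulgA mulVg mulg1.
Qed.

Lemma gmul_deltal e h x : gmul (gdelta h) e x = e (h^-1 * x)%g.
Proof.
rewrite gmulE -[RHS](sum_deltal (fun y => e (y^-1 * x)%g)).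
by apply: eq_bigr => y _; rewrite ffunE.
Qed.

Lemma gdelta_comm g a : gmul (gdelta g) a = gmul (gconj g a) (gdelta g).
Proof.
apply/ffunP=> x; rewrite gmul_deltal gmul_deltar gconjE; congr (a _).
by rewrite conjgE -!mulgA mulVg mulg1.
Qed.

Lemma gmul_scalel k a b : gmul (gscale k a) b = gscale k (gmul a b).
Proof.
apply/ffunP=> x; rewrite !ffunE mulr_sumr.
by apply: eq_bigr => y _; rewrite ffunE mulrA.
Qed.

Lemma gmul_scaler k a b : gmul a (gscale k b) = gscale k (gmul a b).
Proof.
apply/ffunP=> x; rewrite !ffunE mulr_sumr.
by apply: eq_bigr => y _; rewrite ffunE mulrCA.
Qed.

Lemma gscale0 a : gscale 0 a = 0.
Proof. by apply/ffunP=> x; rewrite !ffunE mul0r. Qed.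

Lemma gdecomp a : a = \sum_(g : gT) gscale (a g) (gdelta g).
Proof.
apply/ffunP=> x; rewrite sum_ffunE -[LHS](sum_deltal a).
by apply: eq_bigr => y _; rewrite !ffunE mulrC eq_sym.
Qed.

Lemma gsupp0 (A : {set gT}) : gsupp A (0 : galg).
Proof. by move=> x _; rewrite ffunE. Qed.

Lemma gsuppD (A : {set gT}) a b : gsupp A a -> gsupp A b -> gsupp A (a + b).
Proof. by move=> ha hb x xA; rewrite ffunE ha ?hb ?addr0. Qed.

Lemma gsuppB (A : {set gT}) a b : gsupp A a -> gsupp A b -> gsupp A (a - b).
Proof. by move=> ha hb x xA; rewrite !ffunE ha ?hb ?subr0. Qed.

Lemma gsupp_sum (A : {set gT}) (I : finType) (P : pred I) (u : I -> galg) :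
  (forall i, P i -> gsupp A (u i)) -> gsupp A (\sum_(i | P i) u i).
Proof. by move=> hu; apply: big_ind; [exact: gsupp0 | exact: gsuppD | ]. Qed.

Lemma gsupp_scale (A : {set gT}) k a : gsupp A a -> gsupp A (gscale k a).
Proof. by move=> ha x xA; rewrite ffunE ha ?mulr0. Qed.

Lemma gsupp_delta (A : {set gT}) g : g \in A -> gsupp A (gdelta g).
Proof. by move=> gA x xA; rewrite ffunE; case: eqP => // xg; rewrite xg gA in xA. Qed.

Lemma gsuppS (A B : {set gT}) a : A \subset B -> gsupp A a -> gsupp B a.
Proof. by move=> sAB ha x xB; apply: ha; apply: contra xB; apply: (subsetP sAB). Qed.

Lemma gsupp_mul A a b : gsupp A a -> gsupp A b -> gsupp A (gmul a b).
Proof.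
move=> ha hb x xA; rewrite gmulE big1 // => y _.
have [yA | /ha->] := boolP (y \in A); last by rewrite mul0r.
by rewrite hb ?mulr0 // groupMl ?groupV.
Qed.

Lemma gsupp_conj A h a : h \in ('N(A))%g -> gsupp A a -> gsupp A (gconj h a).
Proof. by move=> nA ha x xA; rewrite gconjE ha // memJ_norm. Qed.

End GroupAlgebra.

Arguments gsupp0 {F gT A}.
Arguments gsupp_delta {F gT A g}.

Section Blocks.
Variables (F : fieldType) (gT : finGroupType).
Local Notation galg := (galg F gT).
Implicit Types (a e f : galg) (A : {group gT}) (h : gT).

Lemma fixed_comm (K : {set gT}) e a :
  gsupp K a -> (forall j, j \in K -> gconj j e = e) -> gmul e a = gmul a e.
Proof.
move=> ha he; apply/ffunP=> x; rewrite !gmulE.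
have inj : injective (fun z => x * z^-1)%g by move=> u v /mulgI /invg_inj.
rewrite (reindex_inj inj) /=; apply: eq_bigr => z _.
rewrite mulrC invMg invgK -mulgA mulVg mulg1.
have [zK | /ha->] := boolP (z \in K); last by rewrite !mul0r.
by rewrite -{1}(he z zK) gconjE conjgE -!mulgA mulVg mulg1.
Qed.

Lemma center_fixed A e h : gcenter A e -> h \in A -> gconj h e = e.
Proof.
case=> _ he hA; apply/ffunP=> x; rewrite gconjE.
have := congr1 (fun u : galg => u (x * h)%g) (he _ (gsupp_delta hA)).
by rewrite gmul_deltar gmul_deltal conjgE mulgK => <-.
Qed.

Lemma center_comm A e a : gcenter A e -> gsupp A a -> gmul e a = gmul a e.
Proof. by case=> _; apply. Qed.

Lemma center_mul A e f : gcenter A e -> gcenter A f -> gcenter A (gmul e f).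
Proof.
move=> ce cf; split; first by apply: gsupp_mul; [case: ce | case: cf].
move=> a sa.
by rewrite gmulA (center_comm cf sa) -gmulA (center_comm ce sa) gmulA.
Qed.

Lemma block_absorb A e f :
  gblock A e -> gcenter A f -> gmul f f = f -> gmul e f != 0 -> gmul e f = e.
Proof.
case=> ce ee _ prim_e cf ff nz.
have fe : gmul f e = gmul e f by apply: (center_comm cf); case: ce.
have [] := prim_e (gmul e f).
- exact: center_mul.
- by rewrite gmulA -(gmulA f) fe gmulA ff -gmulA ee.
- by rewrite gmulA fe -gmulA ee.
- by rewrite -gmulA ee.
- by move=> ef0; rewrite ef0 eqxx in nz.
- by [].
Qed.

Lemma block_orth A e e' : gblock A e -> gblock A e' -> e != e' -> gmul e e' = 0.
Proof.
move=> be be' /eqP ne; apply/eqP/negP => /negP nz; apply: ne.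
have [ce ee _ _] := be; have [ce' ee' _ _] := be'.
have e'e : gmul e' e = gmul e e' by apply: (center_comm ce'); case: ce.
have e'e_e' : gmul e' e = e' by apply: (block_absorb be' ce ee); rewrite e'e.
by rewrite -(block_absorb be ce' ee' nz) -e'e e'e_e'.
Qed.

Lemma center_conj A e h : h \in ('N(A))%g -> gcenter A e -> gcenter A (gconj h e).
Proof.
move=> nA [se ce]; split; first exact: gsupp_conj.
move=> a sa; rewrite -(gconjVK h a) -!gconjM; congr (gconj h _).
by apply: ce; apply: gsupp_conj; rewrite ?groupV.
Qed.

Lemma block_conj A e h : h \in ('N(A))%g -> gblock A e -> gblock A (gconj h e).
Proof.
move=> nA [ce ee ne prim_e]; split; first exact: center_conj.
- by rewrite -gconjM ee.
- by rewrite gconj_eq0.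
move=> f cf ff fe ef.
have [] := prim_e (gconj h^-1 f).
- by apply: center_conj; rewrite ?groupV.
- by rewrite -gconjM ff.
- by rewrite -(gconjK h e) -gconjM fe.
- by rewrite -(gconjK h e) -gconjM ef.
- by move=> f0; left; rewrite -(gconjVK h f) f0 gconj0.
- by move=> f_e; right; rewrite -(gconjVK h f) f_e.
Qed.

End Blocks.

Section PGroupFixpoints.
Variables (R : nzRingType) (p : nat) (charRp : p \in [pchar R]).
Variables (aT : finGroupType) (D : {group aT}) (rT : finType) (to : action D rT).
Variables (Q : {group aT}) (phi : rT -> R).
Hypotheses (pQ : (p.-group Q)%g) (sQD : Q \subset D).

(* A Q-orbit that is not a fixed point has size a positive power of p, so a
   function constant on it sums to 0 over it in characteristic p. *)
Lemma sum_orbit_eq0 y : y \notin ('Fix_to(Q))%g ->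
  (forall q, q \in Q -> phi (to y q) = phi y) -> \sum_(x in orbit to Q y) phi x = 0.
Proof.
move=> nfy phiQ.
rewrite (eq_bigr (fun _ => phi y)); last by move=> x /orbitP[q qQ <-]; apply: phiQ.
rewrite sumr_const -mulr_natr.
suff /eqP -> : (#|orbit to Q y|%:R : R) == 0 by rewrite mulr0.
rewrite -(dvdn_pcharf charRp).
have pn : p.-nat #|orbit to Q y|.
  by rewrite card_orbit_in //; apply: pnat_dvd (dvdn_indexg _ _) pQ.
have [[|k] ek] := p_natP pn; last by rewrite ek dvdn_exp.
by case/negP: nfy; apply/orbit1P; apply: card_orbit1; rewrite ek.
Qed.

Lemma sum_pgroup_fixpoints (S : {set rT}) : [acts Q, on S | to] ->
  (forall x q, x \in S -> q \in Q -> phi (to x q) = phi x) ->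
  \sum_(x in S) phi x = \sum_(x in S | x \in ('Fix_to(Q))%g) phi x.
Proof.
move=> aQS phiQ.
rewrite (bigID (fun x => x \in ('Fix_to(Q))%g)) /= -[RHS]addr0; congr (_ + _).
pose S' := [set x in S | x \notin ('Fix_to(Q))%g].
rewrite (eq_bigl (mem S')); last by move=> x; rewrite !inE.
rewrite (partition_big_imset (orbit to Q)) /= big1 // => O /imsetP[y yS' ->].
have [yS nfy] : y \in S /\ y \notin ('Fix_to(Q))%g by move: yS'; rewrite inE => /andP.
have oS : orbit to Q y \subset S by rewrite acts_sub_orbit.
rewrite (eq_bigl (mem (orbit to Q y))); last first.
  move=> x /=; apply/andP/idP => [[_ /eqP <-]|xo]; first exact: orbit_refl.
  have eo : orbit to Q x = orbit to Q y by apply/orbit_in_eqP.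
  split; last by rewrite eo.
  rewrite inE (subsetP oS) //=; apply: contra nfy => /orbit1P fx.
  have : y \in orbit to Q x by rewrite eo orbit_refl.
  by rewrite fx inE => /eqP yx; apply/orbit1P; rewrite -eo fx yx.
by apply: sum_orbit_eq0 => // q; apply: phiQ.
Qed.

End PGroupFixpoints.

Lemma sum_neq0 (R : nmodType) (I : finType) (A : {pred I}) (u : I -> R) :
  \sum_(i in A) u i != 0 -> exists2 i, i \in A & u i != 0.
Proof.
have [/exists_inP[i iA ui] _ | /exists_inPn u0] := boolP [exists i in A, u i != 0].
  by exists i.
by rewrite big1 ?eqxx // => i /u0; rewrite negbK => /eqP.
Qed.

Section Brauer.
Variables (F : fieldType) (p : nat) (charFp : p \in [pchar F]) (gT : finGroupType).
Local Notation galg := (galg F gT).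
Implicit Types (a b e : galg) (x : gT).

Lemma gBr1 a : gBr 1%g a = a.
Proof. by apply/ffunP=> x; rewrite ffunE cent1T inE. Qed.

Lemma gBrB (Q : {set gT}) a b : gBr Q (a - b) = gBr Q a - gBr Q b.
Proof. by apply/ffunP=> x; rewrite !ffunE; case: ifP; rewrite ?subr0. Qed.

Lemma conj_cent (Q : {set gT}) x q : x \in ('C(Q))%g -> q \in Q -> (x ^ q)%g = x.
Proof. by move=> xC qQ; rewrite conjgE (centP xC q qQ) mulKg. Qed.

(* Br_Q is multiplicative on (k[gT])^Q: in the coefficient of x in C(Q) of a
   product, the terms y outside C(Q) come in Q-orbits of p-power size. *)
Lemma gBr_mul (Q : {group gT}) a b : (p.-group Q)%g -> gfixed Q a -> gfixed Q b ->
  gBr Q (gmul a b) = gmul (gBr Q a) (gBr Q b).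
Proof.
move=> pQ fa fb; apply/ffunP=> x; rewrite [LHS]ffunE.
have [xC | xnC] := boolP (x \in ('C(Q))%g); last first.
  rewrite gmulE big1 // => y _; rewrite !ffunE.
  have [yC | _] := boolP (y \in ('C(Q))%g); last by rewrite mul0r.
  case: ifPn => [yxC | _]; last by rewrite mulr0.
  by case/negP: xnC; rewrite -(mulKVg y x) groupM.
rewrite gmulE [LHS](eq_bigl (fun y => y \in [set: gT])); last by move=> y; rewrite inE.
rewrite (@sum_pgroup_fixpoints _ p charFp _ _ _ ('J)%act Q
  (fun y => a y * b ((y^-1 * x)%g)) pQ (subsetT _) [set: gT]); last 2 first.
- by apply/actsP => q _ y; rewrite !inE.
- move=> y q _ qQ /=; rewrite -{2}(fa q qQ) -{2}(fb q qQ) !gconjE.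
  by rewrite conjMg conjVg (conj_cent xC qQ).
rewrite afixJ gmulE big_mkcond [RHS]big_mkcond /=; apply: eq_bigr => y _.
rewrite !inE !ffunE /=.
have [yC | _] := boolP (y \in ('C(Q))%g); last by rewrite mul0r.
by rewrite groupM ?groupV.
Qed.

Lemma exists_max_Brauer (A : {group gT}) e : e != 0 ->
  exists P : {group gT}, [/\ (p.-group P)%g, P \subset A, gBr P e != 0 &
    forall Q : {group gT}, (p.-group Q)%g -> Q \subset A -> gBr Q e != 0 ->
      (#|Q| <= #|P|)%N].
Proof.
move=> ne0.
pose Br (Q : {group gT}) := [&& (p.-group Q)%g, Q \subset A & gBr Q e != 0].
have Br1 : Br 1%G by rewrite /Br pgroup1 sub1G gBr1.
have [P /and3P[pP sPA BrP] maxP] := @arg_maxnP _ 1%G Br (fun Q => #|Q|) Br1.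
exists P; split=> // Q pQ sQA BrQ; apply: maxP; exact/and3P.
Qed.

Lemma maxBr_card (A : {set gT}) e (P : {group gT}) :
  (p.-group P)%g -> P \subset A -> gBr P e != 0 ->
  (forall Q : {group gT}, (p.-group Q)%g -> Q \subset A -> gBr Q e != 0 ->
    (#|Q| <= #|P|)%N) ->
  maxBr p A e P.
Proof.
move=> pP sPA BrP maxP; split=> // Q pQ sQA BrQ sPQ.
by apply/eqP; rewrite eq_sym eqEcard sPQ maxP.
Qed.

End Brauer.

(* The left regular representation k[gT] -> M_|gT|(k) is an injective algebra
   morphism; ranks of matrices bound the length of chains of idempotents. *)
Section RegularRepresentation.
Variables (F : fieldType) (gT : finGroupType).
Local Notation galg := (galg F gT).
Implicit Types (a b e f : galg).

Definition regmx a : 'M[F]_#|gT| := \matrix_(i, j) a (enum_val i * (enum_val j)^-1)%g.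

Lemma regmx_eq0 a : (regmx a == 0) = (a == 0).
Proof.
apply/eqP/eqP => [ra0 | ->]; last by apply/matrixP=> i j; rewrite !mxE !ffunE.
apply/ffunP=> x; have := congr1 (fun M : 'M[F]_#|gT| => M (enum_rank x) (enum_rank 1%g)) ra0.
by rewrite !mxE !enum_rankK invg1 mulg1 ffunE.
Qed.

Lemma regmxM a b : regmx (gmul a b) = regmx a *m regmx b.
Proof.
apply/matrixP=> i j; rewrite !mxE gmulE.
under [RHS]eq_bigr do rewrite !mxE.
rewrite -(big_enum_val (fun y => a (enum_val i * y^-1)%g * b (y * (enum_val j)^-1)%g)) /=.
have inj : injective (fun z => enum_val i * z^-1)%g by move=> u v /mulgI /invg_inj.
rewrite (reindex_inj inj) /=; apply: eq_big => [y|y _]; first by rewrite inE.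
by rewrite invMg invgK mulgA mulgKV.
Qed.

Lemma rank_idem_lt e f : gmul e e = e -> gmul f f = f -> gmul f e = f ->
  gmul e f = f -> f != e -> (\rank (regmx f) < \rank (regmx e))%N.
Proof.
move=> ee ff fe ef nfe.
have sfe : (regmx f <= regmx e)%MS by rewrite -{1}fe regmxM submxMl.
have [le eq_rk] := mxrank_leqif_sup sfe.
rewrite ltn_neqAle le eq_rk andbT; apply: contra nfe => sef.
have e_f_idem : gmul e (e - f) = e - f by rewrite gmulBr ee ef.
have f_ortho : gmul f (e - f) = 0 by rewrite gmulBr ff fe subrr.
have : regmx (e - f) == 0.
  have regmx0 : regmx 0 = 0 by apply/eqP; rewrite regmx_eq0.
  by rewrite -e_f_idem regmxM -(mulmxKpV sef) -mulmxA -regmxM f_ortho regmx0 mulmx0.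
by rewrite regmx_eq0 subr_eq0 eq_sym.
Qed.

(* In a subspace Alg of k[gT], an idempotent e with L(e) <> 0, L additive,
   splits into primitive idempotents of Alg, one of which has L(i) <> 0:
   induction on the rank, splitting e = f + (e - f) when e is not primitive. *)
Lemma exists_prim_idem (Alg : galg -> Prop) (L : galg -> galg) :
  (forall a b, Alg a -> Alg b -> Alg (a - b)) ->
  (forall a b, L (a - b) = L a - L b) ->
  forall e, Alg e -> gmul e e = e -> L e != 0 ->
    exists i, prim_idem Alg i /\ L i != 0.
Proof.
move=> AlgB LB e.
have L0 : L 0 = 0 by have := LB 0 0; rewrite subrr => ->; rewrite subrr.
move: {2}(\rank (regmx e)).+1 (ltnSn (\rank (regmx e))) => n.
elim: n e => // n IH e rk Ae ee Le.
have ne0 : e != 0 by apply: contra Le => /eqP->; rewrite L0.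
have [prim | nprim] := classic (forall f, Alg f -> gmul f f = f ->
        gmul f e = f -> gmul e f = f -> f = 0 \/ f = e).
  by exists e.
have [f nprim_f] := not_all_ex_not _ _ nprim.
have [Af {}nprim_f] := imply_to_and _ _ nprim_f.
have [ff {}nprim_f] := imply_to_and _ _ nprim_f.
have [fe {}nprim_f] := imply_to_and _ _ nprim_f.
have [ef nor] := imply_to_and _ _ nprim_f.
have nf0 : f != 0 by apply/eqP => f0; apply: nor; left.
have nfe : f != e by apply/eqP => f_e; apply: nor; right.
pose g := e - f.
have ge : gmul g e = g by rewrite gmulBl ee fe.
have eg : gmul e g = g by rewrite gmulBr ee ef.
have gg : gmul g g = g by rewrite gmulBr ge gmulBl ef ff subrr subr0.
have nge : g != e by rewrite /g subr_eq -{1}[e]addr0 (inj_eq (addrI e)) eq_sym.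
have Ag : Alg g by apply: AlgB.
have [Lf | Lf] := boolP (L f == 0).
  apply: (IH g) => //; last by rewrite /g LB (eqP Lf) subr0.
  by apply: leq_trans (rank_idem_lt ee gg ge eg nge) _; rewrite -ltnS.
by apply: (IH f) => //; apply: leq_trans (rank_idem_lt ee ff fe ef nfe) _; rewrite -ltnS.
Qed.

End RegularRepresentation.

Lemma exists_source_idem (F : fieldType) (gT : finGroupType) (A : {set gT})
    (P : {group gT}) (e : galg F gT) :
  gsupp A e -> gmul e e = e -> gfixed P e -> gBr P e != 0 ->
  exists i, prim_idem (fixalg A e P) i /\ gBr P i != 0.
Proof.
move=> sAe ee fe; apply: (exists_prim_idem _ (@gBrB _ _ P)) => //.
move=> u v [su ue fu] [sv ve fv]; split; first exact: gsuppB.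
  by rewrite gmulBl ue ve.
by move=> q qP; rewrite gconjB fu ?fv.
Qed.

Section Trace.
Variables (F : fieldType) (gT : finGroupType) (G K : {group gT}).
Hypothesis sKG : K \subset G.

Lemma gTr_split (a : galg F gT) :
  gTr G K a = a + \sum_(X in lcosets K G | X != K) gconj (repr X) a.
Proof.
have KL : (K : {set gT}) \in lcosets K G.
  by apply/lcosetsP; exists 1%g; rewrite ?group1 ?lcoset1.
by rewrite /gTr (bigD1 (K : {set gT})) //= repr_group gconj1.
Qed.

Lemma repr_lcosets_out X : X \in lcosets K G -> X != K -> repr X \in G :\: K.
Proof.
case/lcosetsP=> x xG ->{X} XK.
have /lcosetP[j jK rX] : repr (x *: K)%g \in (x *: K)%g := mem_repr _ (lcoset_refl K x).
have rG : (x * j)%g \in G by rewrite groupM // (subsetP sKG).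
rewrite inE rX rG andbT; apply: contra XK => xjK.
by rewrite lcoset_id // -(mulgK j x) groupM ?groupV.
Qed.

End Trace.

Lemma inertia_group_set (F : fieldType) (gT : finGroupType) (H : {group gT})
  (c : galg F gT) : group_set (inertia H c).
Proof.
apply/group_setP; split; first by rewrite inE group1 gconj1 eqxx.
move=> x y; rewrite !inE => /andP[xH /eqP xc] /andP[yH /eqP yc].
by rewrite groupM // -gconj_mulg yc xc eqxx.
Qed.

Canonical inertia_group (F : fieldType) (gT : finGroupType) (H : {group gT})
  (c : galg F gT) := Group (inertia_group_set H c).

Section Fong.
Variables (F : fieldType) (gT : finGroupType) (N G H : {group gT}).
Hypotheses (nNG : (N <| G)%g) (nGH : (G <| H)%g) (nNH : (N <| H)%g).
Variables (c bt : galg F gT).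
Hypotheses (hc : gblock N c) (hbt : gblock (inertia H c :&: G) bt)
  (hbtc : covers bt c).

Local Notation I := (inertia_group H c).
Local Notation J := (inertia_group H c :&: G)%G.

Lemma inertia_fix h : h \in I -> gconj h c = c.
Proof. by rewrite inE => /andP[_ /eqP]. Qed.

Lemma sub_inertia_H : I \subset H.
Proof. by apply/subsetP=> h; rewrite inE => /andP[]. Qed.

Lemma sub_G_H : G \subset H.
Proof. by case/andP: nGH. Qed.

(* A central idempotent of kN is fixed by N, so N \subset I :&: G. *)
Lemma sub_N_J : N \subset J.
Proof.
rewrite subsetI (normal_sub nNG) andbT; apply/subsetP=> n nN.
rewrite inE (subsetP (normal_sub nNH)) //=.
by have [cc _ _ _] := hc; rewrite (center_fixed cc nN).
Qed.

(* c lies in kN and is fixed by J, hence is central in kJ. *)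
Lemma c_center_J : gcenter J c.
Proof.
have [[sc _] _ _ _] := hc; split; first exact: gsuppS sub_N_J sc.
move=> a sa; apply: fixed_comm sa _ => j /setIP[jI _]; exact: inertia_fix.
Qed.

(* bt covers c, so the block bt absorbs the central idempotent c of kJ. *)
Lemma bt_c : gmul bt c = bt.
Proof. by have [_ cc _ _] := hc; apply: block_absorb hbt c_center_J cc hbtc. Qed.

Lemma c_bt : gmul c bt = bt.
Proof.
by have [[sbt _] _ _ _] := hbt; rewrite (center_comm c_center_J sbt) bt_c.
Qed.

Lemma conj_c_orth h : h \in H -> h \notin I ->
  gmul c (gconj h c) = 0 /\ gmul (gconj h c) c = 0.
Proof.
move=> hH hnI; have hc' := block_conj (subsetP (normal_norm nNH) h hH) hc.
have ne : c != gconj h c by apply: contra hnI => /eqP hcc; rewrite inE hH -hcc eqxx.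
by split; [exact: block_orth hc hc' ne | apply: block_orth hc' hc _; rewrite eq_sym].
Qed.

(* Since bt = c bt c, the orthogonality passes from c to bt. *)
Lemma conj_bt_orth h : h \in H -> h \notin I ->
  gmul bt (gconj h bt) = 0 /\ gmul (gconj h bt) bt = 0.
Proof.
move=> hH hnI; have [o1 o2] := conj_c_orth hH hnI.
have hbt_l : gconj h bt = gmul (gconj h c) (gconj h bt) by rewrite -gconjM c_bt.
have hbt_r : gconj h bt = gmul (gconj h bt) (gconj h c) by rewrite -gconjM bt_c.
split; first by rewrite hbt_l -{1}bt_c gmulA -(gmulA c) o1 gmul0l gmul0r.
by rewrite hbt_r -{2}c_bt gmulA -(gmulA (gconj h c)) o2 gmul0l gmul0r.
Qed.

Variable b : galg F gT.
Hypotheses (hbH : forall h, h \in H -> gconj h b = b)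
  (hTr : b = gTr G (inertia H c :&: G) bt).

Lemma not_inertia g : g \in G :\: J -> g \in H /\ g \notin I.
Proof.
by case/setDP=> gG gnJ; split; [exact: (subsetP sub_G_H) | rewrite inE gG andbT in gnJ].
Qed.

Lemma b_mull T : (forall g, g \in G :\: J -> gmul (gconj g bt) T = 0) ->
  gmul b T = gmul bt T.
Proof.
move=> T0; rewrite hTr gTr_split ?subsetIr // gmulDl gmul_suml big1 ?addr0 //.
by move=> X /andP[XL XJ]; apply/T0/repr_lcosets_out; rewrite ?subsetIr.
Qed.

Lemma b_mulr T : (forall g, g \in G :\: J -> gmul T (gconj g bt) = 0) ->
  gmul T b = gmul T bt.
Proof.
move=> T0; rewrite hTr gTr_split ?subsetIr // gmulDr gmul_sumr big1 ?addr0 //.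
by move=> X /andP[XL XJ]; apply/T0/repr_lcosets_out; rewrite ?subsetIr.
Qed.

Lemma bt_idem : gmul bt bt = bt.
Proof. by case: hbt. Qed.

Lemma bt_neq0 : bt != 0.
Proof. by case: hbt. Qed.

Lemma b_bt : gmul b bt = bt.
Proof.
by rewrite b_mull ?bt_idem // => g /not_inertia[gH gnI]; case: (conj_bt_orth gH gnI).
Qed.

Lemma bt_b : gmul bt b = bt.
Proof.
by rewrite b_mulr ?bt_idem // => g /not_inertia[gH gnI]; case: (conj_bt_orth gH gnI).
Qed.

(* I fixes bt: for h in I, ^h bt is a block of kJ with b ^h bt = ^h bt, and
   b ^h bt = bt ^h bt since ^h bt = c ^h bt is killed by the ^g c, g not in I. *)
Lemma inertia_fixes_bt h : h \in I -> gconj h bt = bt.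
Proof.
move=> hI; have hH := subsetP sub_inertia_H h hI.
have nJh : h \in ('N(J))%g.
  rewrite -sub1set normsI // sub1set ?(subsetP (normG I)) //.
  exact: subsetP (normal_norm nGH) h hH.
have hbt' := block_conj nJh hbt.
have c_hbt : gmul c (gconj h bt) = gconj h bt by rewrite -{1}(inertia_fix hI) -gconjM c_bt.
have b_hbt : gmul b (gconj h bt) = gconj h bt by rewrite -{1}(hbH hH) -gconjM b_bt.
have b_hbt' : gmul b (gconj h bt) = gmul bt (gconj h bt).
  apply: b_mull => g /not_inertia[gH gnI]; have [_ o2] := conj_c_orth gH gnI.
  by rewrite -c_hbt -{1}bt_c gconjM gmulA -(gmulA (gconj g c)) o2 gmul0l gmul0r.
apply/esym/eqP/negPn/negP => /(block_orth hbt hbt') o.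
by move: bt_neq0; rewrite -(gconj_eq0 h) -b_hbt b_hbt' o eqxx.
Qed.

Lemma repr_lcoset_G y : y \in G -> repr (y *: J)%g \in G.
Proof.
move=> yG; have /lcosetP[j /setIP[_ jG] ->] := mem_repr _ (lcoset_refl J y).
exact: groupM.
Qed.

(* H = G I: as ^h bt b = ^h bt <> 0, some term ^g bt of the trace b meets
   ^h bt, forcing g^-1 h in I. *)
Lemma H_eq_GI h : h \in H -> exists2 g, g \in G & (g^-1 * h)%g \in I.
Proof.
move=> hH.
have : gmul (gconj h bt) b != 0.
  by rewrite -{1}(hbH hH) -gconjM bt_b gconj_eq0 bt_neq0.
rewrite hTr /gTr gmul_sumr => /sum_neq0[X /lcosetsP[x xG ->] nz].
have rG := repr_lcoset_G xG.
exists (repr (x *: J))%g => //; apply: contraR nz => gnI.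
have ghH : ((repr (x *: J))^-1 * h)%g \in H.
  by rewrite groupM ?groupV // (subsetP sub_G_H).
have [_ o2] := conj_bt_orth ghH gnI.
by rewrite -{1}(mulKVg (repr (x *: J))%g h) -gconj_mulg -gconjM o2 gconj0.
Qed.

(* Since I fixes bt, the values of bt conjugated by a coset representative of
   I only depend on the coset. *)
Lemma bt_conj_rcoset x y : bt (x ^ (repr (I :* y))^-1)%g = bt (x ^ y^-1)%g.
Proof.
have /rcosetP[i iI ->] : repr (I :* y)%g \in (I :* y)%g := mem_repr_rcoset I y.
by rewrite invMg conjgM -gconjE inertia_fixes_bt ?groupV.
Qed.

(* b = \sum_(Iy in I\H) ^(y^-1) bt: reindex G/J by I\H through gJ |-> I g^-1,
   a bijection because H = G I and G :&: I = J. *)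
Lemma b_coef x : b x = \sum_(Y in rcosets I H) bt (x ^ (repr Y)^-1)%g.
Proof.
rewrite hTr /gTr sum_ffunE; under eq_bigr do rewrite gconjE.
pose pi (X : {set gT}) := (I :* (repr X)^-1)%g.
have inj : {in lcosets J G &, injective pi}.
  move=> X1 X2 /lcosetsP[x1 x1G ->] /lcosetsP[x2 x2G ->] E.
  have r1X : repr (x1 *: J)%g \in (x1 *: J)%g := mem_repr _ (lcoset_refl J x1).
  have r2X : repr (x2 *: J)%g \in (x2 *: J)%g := mem_repr _ (lcoset_refl J x2).
  rewrite -(lcoset_eqP r1X) -(lcoset_eqP r2X); apply/lcoset_eqP.
  rewrite mem_lcoset; apply/setIP; split; last by rewrite groupM ?groupV ?repr_lcoset_G.
  have : ((repr (x1 *: J))^-1)%g \in (I :* (repr (x2 *: J))^-1)%g.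
    by rewrite -/(pi _) -E rcoset_refl.
  by rewrite mem_rcoset invgK -(invgK (_ * _)%g) groupV invMg invgK.
have imE : rcosets I H = pi @: lcosets J G.
  apply/setP => Y; apply/idP/imsetP => [/rcosetsP[h hH ->] | [X /lcosetsP[y yG ->] ->]].
    have [g gG gI] := H_eq_GI (groupVr hH).
    exists (g *: J)%g; first by apply/lcosetsP; exists g.
    apply/rcoset_eqP; rewrite mem_rcoset invgK.
    have /lcosetP[j /setIP[jI _] ->] := mem_repr _ (lcoset_refl J g).
    by rewrite mulgA groupM // -(invgK (h * g)%g) groupV invMg.
  rewrite /pi mem_rcosets; apply: (subsetP (mulG_subr I H)).
  by rewrite groupV (subsetP sub_G_H) ?repr_lcoset_G.
rewrite imE (big_imset _ inj); apply: eq_bigr => X _.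
by rewrite /pi bt_conj_rcoset invgK.
Qed.

(* Br_Q(b) <> 0 forces a conjugate of Q into I with nonzero Brauer image of
   bt: a Q-fixed coset Iy in the expansion of b x (x in C(Q)) must carry a
   nonzero term, the other Q-orbits contributing multiples of p. *)
Lemma Brauer_conj_inertia p (charFp : p \in [pchar F]) (Q : {group gT}) :
  (p.-group Q)%g -> Q \subset H -> gBr Q b != 0 ->
  exists y, (Q :^ y)%g \subset I /\ gBr (Q :^ y)%g bt != 0.
Proof.
move=> pQ sQH BrQ.
have [x xC bx] : exists2 x, x \in ('C(Q))%g & b x != 0.
  apply/exists_inP; apply: contraR BrQ => /exists_inPn b0.
  apply/eqP/ffunP => x; rewrite !ffunE; case: ifP => // xC.
  by apply/eqP; have := b0 x xC; rewrite negbK.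
have aQS : [acts Q, on rcosets I H | 'Rs] by apply: subset_trans sQH (actsRs_rcosets I H).
move: bx; rewrite b_coef (sum_pgroup_fixpoints charFp (to := 'Rs%act) pQ (subsetT Q) aQS).
  case/sum_neq0 => Y /andP[/rcosetsP[y yH ->] /afixP Yfix].
  rewrite bt_conj_rcoset => nz; exists (y^-1)%g; split.
    apply/subsetP => z; rewrite mem_conjg invgK => zy.
    have := Yfix _ zy; rewrite /= rcosetE -rcosetM.
    have -> : (y * z ^ y = z * y)%g by rewrite conjgE mulKVg.
    by move=> E; have := rcoset_refl I (z * y)%g; rewrite E mem_rcoset mulgK.
  apply: contra nz => /eqP Br0; have := congr1 (fun u : galg F gT => u (x ^ y^-1)%g) Br0.
  by rewrite !ffunE centJ memJ_conjg xC => ->.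
move=> Y q /rcosetsP[y0 _ ->] qQ /=.
by rewrite rcosetE -rcosetM !bt_conj_rcoset invMg conjgM (conj_cent xC) ?groupV.
Qed.

(* bt (kG) bt \subset kJ: for g in G \ J, bt g bt = bt (^g bt) g = 0. *)
Lemma corner_supp f : gsupp G f -> gsupp J (gmul (gmul bt f) bt).
Proof.
have [[sbt _] _ _ _] := hbt.
move=> sf; rewrite (gdecomp f) gmul_sumr gmul_suml.
apply: gsupp_sum => g _; rewrite gmul_scaler gmul_scalel.
have [gG | /sf->] := boolP (g \in G); last by rewrite gscale0; apply: gsupp0.
apply: gsupp_scale; have [gJ | gnJ] := boolP (g \in J).
  by apply: gsupp_mul => //; apply: gsupp_mul => //; apply: gsupp_delta.
have [gH gnI] : g \in H /\ g \notin I by apply: not_inertia; rewrite inE gnJ.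
rewrite gmulA gdelta_comm -gmulA.
by have [-> _] := conj_bt_orth gH gnI; rewrite gmul0l; apply: gsupp0.
Qed.

(* Br_P is multiplicative on P-fixed elements and b bt = bt. *)
Lemma Br_b_of_bt p (charFp : p \in [pchar F]) (P : {group gT}) :
  (p.-group P)%g -> P \subset I -> gBr P bt != 0 -> gBr P b != 0.
Proof.
move=> pP sPI; apply: contra => /eqP Brb0.
have fix_b : gfixed P b by move=> q /(subsetP sPI) /(subsetP sub_inertia_H) /hbH.
have fix_bt : gfixed P bt by move=> q /(subsetP sPI) /inertia_fixes_bt.
by rewrite -b_bt (gBr_mul charFp pP fix_b fix_bt) Brb0 gmul0l.
Qed.

(* A primitive idempotent i of (kJ bt)^P stays primitive in (kG b)^P: an
   idempotent f of (kG b)^P with f = f i = i f equals i (bt f bt) i, which lies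
   in (kJ bt)^P. *)
Lemma source_prim_lift (P : {group gT}) i :
  prim_idem (fixalg J bt P) i -> prim_idem (fixalg G b P) i.
Proof.
case=> [[si ibt fi] ii ni prim_i].
have [cbt _ _ _] := hbt.
have bti : gmul bt i = i by rewrite (center_comm cbt si) ibt.
split=> //.
  split; [exact: gsuppS (subsetIr _ _) si | by rewrite -{1}ibt gmulA bt_b ibt | exact: fi].
move=> f [sf fb ffix] ff fi' if'; apply: prim_i => //; split=> //.
- have corner : gmul (gmul i (gmul (gmul bt f) bt)) i = f.
    by rewrite -!gmulA ibt if' gmulA bti fi'.
  by rewrite -corner; apply: gsupp_mul => //; apply: gsupp_mul => //; apply: corner_supp.
- by rewrite -{1}fi' gmulA ibt fi'.
Qed.

End Fong.

Theorem mainTheorem9 (F : closedFieldType) (p : nat) (charFp : p \in [pchar F])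
  (gT : finGroupType) (N G H : {group gT})
  (nNG : (N <| G)%g) (nGH : (G <| H)%g) (nNH : (N <| H)%g)
  (b c bt : galg F gT) :
  gblock G b -> (forall h, h \in H -> gconj h b = b) ->
  gblock N c -> covers b c ->
  gblock (inertia H c :&: G) bt -> covers bt c ->
  b = gTr G (inertia H c :&: G) bt ->
  exists (P : {group gT}) (i : galg F gT),
    [/\ P \subset inertia H c,
        maxBr p H b P,
        maxBr p (inertia H c) bt P,
        prim_idem (fixalg (inertia H c :&: G) bt P) i &
        prim_idem (fixalg G b P) i /\ gBr P i != 0].
Proof.
move=> _ hbH hc _ hbt hbtc hTr.
have fixI := inertia_fixes_bt nNG nGH nNH hc hbt hbtc hbH hTr.
have Br_b := Br_b_of_bt nNG nGH nNH hc hbt hbtc hbH hTr charFp.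
have conjI := Brauer_conj_inertia nNG nGH nNH hc hbt hbtc hbH hTr charFp.
have lift := source_prim_lift nNG nGH nNH hc hbt hbtc hTr.
have [[sbt _] btbt nz_bt _] := hbt.
have [P [pP sPI BrPbt maxP]] := exists_max_Brauer p (inertia_group H c) nz_bt.
have fix_bt : gfixed P bt by move=> q /(subsetP sPI) /fixI.
have [i [prim_i Bri]] := exists_source_idem sbt btbt fix_bt BrPbt.
exists P, i; split=> //.
- apply: maxBr_card => //; first exact: subset_trans sPI (sub_inertia_H _ _).
    exact: Br_b.
  move=> Q pQ sQH /(conjI Q pQ sQH)[y [sQyI BrQy]].
  by rewrite -(cardJg Q y) maxP ?pgroupJ.
- exact: maxBr_card.
- by split; first exact: lift.
Qed.
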